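(* Let $(X,\|\cdot,\cdot\|)$ be a $2$-normed space, $E\subseteq X$, and $f:E\to X$. If $f$ is statistically sequentially continuous on $E$, then $f$ is sequentially continuous on $E$.
   Context: A $2$-normed space is a real linear space $X$ with $\dim X>1$ together with a function $\|\cdot,\cdot\|:X^2\to\mathbb{R}$ such that for all $x,y,z\in X$, $\alpha\in\mathbb{R}$: (1) $\|x,y\|=0$ iff $x,y$ are linearly dependent; (2) $\|x,y\|=\|y,x\|$; (3) $\|\alpha x,y\|=|\alpha|\|x,y\|$; (4) $\|x,y+z\|\le\|x,y\|+\|x,z\|$. A sequence $(x_n)$ in $X$ converges to $x\in X$ if $\lim_{n\to\infty}\|x_n-x,z\|=0$ for every $z\in X$. For $M\subseteq\mathbb{N}$, its asymptotic density is $\delta(M)=\lim_{n\to\infty}\frac1n|\{k\le n:k\in M\}|$ when the limit exists. A sequence $(x_k)$ in $X$ statistically converges to $L\in X$ if for every $\epsilon>0$ and every $z\in X$, $\lim_{n\to\infty}\frac1n|\{k\le n:\|x_k-L,z\|\ge\epsilon\}|=0$. A function $f:E\to X$ is sequentially continuous on $E$ if for every $x_0\in E$ and every sequence $(x_n)$ in $E$ converging to $x_0$, $(f(x_n))$ converges to $f(x_0)$. It is statistically sequentially continuous on $E$ if for every $x_0\in E$ and every sequence $(x_n)$ in $E$ statistically converging to $x_0$, $(f(x_n))$ statistically converges to $f(x_0)$. *)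

From Stdlib Require Import Reals Lra Lia ClassicalEpsilon.
Open Scope R_scope.

Record TwoNormedSpace := {
  carrier :> Type;
  vzero : carrier;
  vadd : carrier -> carrier -> carrier;
  vopp : carrier -> carrier;
  vscal : R -> carrier -> carrier;
  vadd_assoc : forall x y z, vadd x (vadd y z) = vadd (vadd x y) z;
  vadd_comm : forall x y, vadd x y = vadd y x;
  vadd_zero : forall x, vadd x vzero = x;
  vadd_opp : forall x, vadd x (vopp x) = vzero;
  vscal_one : forall x, vscal 1 x = x;
  vscal_assoc : forall a b x, vscal a (vscal b x) = vscal (a * b) x;
  vscal_distr_v : forall a x y, vscal a (vadd x y) = vadd (vscal a x) (vscal a y);
  vscal_distr_s : forall a b x, vscal (a + b) x = vadd (vscal a x) (vscal b x);
  dim_gt1 : exists x y : carrier,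
      forall a b : R, vadd (vscal a x) (vscal b y) = vzero -> a = 0 /\ b = 0;
  norm2 : carrier -> carrier -> R;
  norm2_zero : forall x y, norm2 x y = 0 <->
      exists a b : R, (a <> 0 \/ b <> 0) /\ vadd (vscal a x) (vscal b y) = vzero;
  norm2_sym : forall x y, norm2 x y = norm2 y x;
  norm2_scal : forall (a : R) x y, norm2 (vscal a x) y = Rabs a * norm2 x y;
  norm2_triangle : forall x y z, norm2 x (vadd y z) <= norm2 x y + norm2 x z
}.

Definition vsub (X : TwoNormedSpace) (x y : X) : X := vadd X x (vopp X y).

Definition converges (X : TwoNormedSpace) (xs : nat -> X) (x : X) : Prop :=
  forall z : X, Un_cv (fun n => norm2 X (vsub X (xs n) x) z) 0.

(* |{k <= n : P k}| with k ranging over 1..n. *)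
Fixpoint count_upto (P : nat -> Prop) (n : nat) : nat :=
  match n with
  | O => O
  | S m => count_upto P m +
           (if excluded_middle_informative (P (S m)) then 1 else 0)%nat
  end.

Definition stat_converges (X : TwoNormedSpace) (xs : nat -> X) (L : X) : Prop :=
  forall (eps : R) (z : X), eps > 0 ->
    Un_cv (fun n => INR (count_upto (fun k => norm2 X (vsub X (xs k) L) z >= eps) n)
                    / INR n) 0.

(* E is a subset of X given as a predicate; f : E -> X is represented by a
   function X -> X whose values off E are irrelevant. *)
Definition seq_continuous_on (X : TwoNormedSpace) (E : X -> Prop) (f : X -> X) : Prop :=
  forall (x0 : X) (xs : nat -> X), E x0 -> (forall n, E (xs n)) ->
    converges X xs x0 -> converges X (fun n => f (xs n)) (f x0).

Definition stat_seq_continuous_on (X : TwoNormedSpace) (E : X -> Prop) (f : X -> X) : Prop :=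
  forall (x0 : X) (xs : nat -> X), E x0 -> (forall n, E (xs n)) ->
    stat_converges X xs x0 -> stat_converges X (fun n => f (xs n)) (f x0).

(* Let x_n -> x0 in E and fix z.  Put d_n = ||f x_n - f x0, z||.
   If d_n does not tend to 0, some e > 0 and indices g(N) >= N satisfy
   d_(g N) >= e for all N.  The subsequence x_(g N) still converges to x0,
   and ordinary convergence implies statistical convergence (its exceptional
   sets are finite, so they have density 0).  By statistical sequential
   continuity f x_(g N) statistically converges to f x0; but its exceptional
   set for e and z is all of N, whose density is 1, a contradiction. *)

From Stdlib Require Import Reals.
From Stdlib Require Import Lra Lia Classical ClassicalEpsilon.
Open Scope R_scope.

Section TwoNormFacts.

Variable X : TwoNormedSpace.

(* 0 x = 0, from the distributivity 0 x = 0 x + 0 x. *)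
Lemma vscal_zero (x : X) : vscal X 0 x = vzero X.
Proof.
  assert (Hdouble : vscal X 0 x = vadd X (vscal X 0 x) (vscal X 0 x)).
  { rewrite <- vscal_distr_s. f_equal. lra. }
  assert (Hcancel := vadd_opp X (vscal X 0 x)).
  rewrite Hdouble in Hcancel at 1.
  rewrite <- vadd_assoc, vadd_opp, vadd_zero in Hcancel.
  exact Hcancel.
Qed.

(* The additive inverse is scaling by -1; it lets [norm2_scal] act on [vopp]. *)
Lemma vopp_scal (y : X) : vopp X y = vscal X (-1) y.
Proof.
  assert (Hinv : vadd X y (vscal X (-1) y) = vzero X).
  { rewrite <- (vscal_one X y) at 1. rewrite <- vscal_distr_s.
    replace (1 + -1) with 0 by lra. apply vscal_zero. }
  rewrite <- (vadd_zero X (vopp X y)), <- Hinv.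
  rewrite vadd_assoc, (vadd_comm X (vopp X y) y), vadd_opp.
  rewrite vadd_comm, vadd_zero. reflexivity.
Qed.

(* A 2-norm is nonnegative: 0 = ||x, y - y|| <= ||x, y|| + ||x, -y|| = 2 ||x, y||. *)
Lemma norm2_nonneg (x y : X) : 0 <= norm2 X x y.
Proof.
  assert (Hzero : norm2 X x (vzero X) = 0).
  { apply norm2_zero. exists 0, 1. split; [right; lra |].
    rewrite vscal_zero, vscal_one, vadd_zero. reflexivity. }
  assert (Htri := norm2_triangle X x y (vopp X y)).
  rewrite vadd_opp, Hzero, vopp_scal, (norm2_sym X x (vscal X (-1) y)),
    norm2_scal, (norm2_sym X y x) in Htri.
  replace (Rabs (-1)) with 1 in Htri by (rewrite Rabs_left; lra).
  lra.
Qed.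

End TwoNormFacts.

Lemma count_upto_le (P : nat -> Prop) (n : nat) : (count_upto P n <= n)%nat.
Proof.
  induction n as [| n IH]; simpl; [lia |].
  destruct (excluded_middle_informative (P (S n))); lia.
Qed.

Lemma count_upto_bounded (P : nat -> Prop) (N : nat) :
  (forall k, (k > N)%nat -> ~ P k) -> forall n, (count_upto P n <= N)%nat.
Proof.
  intros Hfin n; induction n as [| n IH]; simpl; [lia |].
  destruct (excluded_middle_informative (P (S n))) as [HP | HP]; [| lia].
  destruct (Compare_dec.le_lt_dec (S n) N) as [Hle | Hlt].
  - pose proof (count_upto_le P n). lia.
  - exfalso; exact (Hfin (S n) Hlt HP).
Qed.

Lemma count_upto_full (P : nat -> Prop) :
  (forall k, P k) -> forall n, count_upto P n = n.
Proof.
  intros Hall n; induction n as [| n IH]; simpl; [reflexivity |].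
  destruct (excluded_middle_informative (P (S n))) as [_ | HP];
    [lia | exfalso; exact (HP (Hall (S n)))].
Qed.

Lemma bounded_count_density_zero (c : nat -> nat) (N : nat) :
  (forall n, (c n <= N)%nat) -> Un_cv (fun n => INR (c n) / INR n) 0.
Proof.
  intros Hc e He.
  destruct (INR_unbounded (INR N / e)) as [M HM].
  exists (S M). intros n Hn. unfold R_dist. rewrite Rminus_0_r.
  assert (HnM : INR (S M) <= INR n) by (apply le_INR; lia).
  rewrite S_INR in HnM.
  assert (Hn_pos : 0 < INR n) by (pose proof (pos_INR M); lra).
  assert (HcN : INR (c n) <= INR N) by (apply le_INR, Hc).
  assert (HN_lt : INR N < e * INR n).
  { apply (Rmult_lt_compat_r e) in HM; [| exact He].
    unfold Rdiv in HM. rewrite Rmult_assoc, Rinv_l in HM by lra. nra. }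
  rewrite Rabs_right.
  - apply (Rmult_lt_reg_r (INR n)); [exact Hn_pos |].
    unfold Rdiv. rewrite Rmult_assoc, Rinv_l by lra. lra.
  - apply Rle_ge, Rmult_le_pos; [apply pos_INR |].
    left; apply Rinv_0_lt_compat, Hn_pos.
Qed.

Lemma full_count_not_density_zero (P : nat -> Prop) :
  (forall k, P k) -> ~ Un_cv (fun n => INR (count_upto P n) / INR n) 0.
Proof.
  intros Hall Hcv.
  destruct (Hcv (1 / 2) ltac:(lra)) as [N HN].
  specialize (HN (S N) ltac:(lia)).
  rewrite (count_upto_full P Hall) in HN.
  unfold R_dist, Rdiv in HN.
  rewrite Rinv_r in HN by (apply not_0_INR; lia).
  rewrite Rminus_0_r, Rabs_R1 in HN. lra.
Qed.

Lemma converges_stat_converges (X : TwoNormedSpace) (xs : nat -> X) (x : X) :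
  converges X xs x -> stat_converges X xs x.
Proof.
  intros Hcv eps z Heps.
  destruct (Hcv z eps Heps) as [N HN].
  apply (bounded_count_density_zero _ N), count_upto_bounded.
  intros k Hk Hfar.
  specialize (HN k ltac:(lia)). unfold R_dist in HN. rewrite Rminus_0_r in HN.
  pose proof (Rle_abs (norm2 X (vsub X (xs k) x) z)). lra.
Qed.

Lemma far_sequence_not_stat_converges (X : TwoNormedSpace) (ys : nat -> X)
    (L z : X) (e : R) :
  e > 0 -> (forall k, norm2 X (vsub X (ys k) L) z >= e) ->
  ~ stat_converges X ys L.
Proof.
  intros He Hfar Hst.
  exact (full_count_not_density_zero _ Hfar (Hst e z He)).
Qed.

Lemma converges_reindex (X : TwoNormedSpace) (xs : nat -> X) (x : X)
    (g : nat -> nat) :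
  (forall N, (g N >= N)%nat) -> converges X xs x ->
  converges X (fun N => xs (g N)) x.
Proof.
  intros Hg Hcv z e He.
  destruct (Hcv z e He) as [N HN].
  exists N. intros n Hn. apply HN. specialize (Hg n). lia.
Qed.

Lemma Un_cv_0_or_frequently_large (d : nat -> R) :
  (forall n, 0 <= d n) ->
  Un_cv d 0 \/
  exists e g, e > 0 /\ forall N, (g N >= N)%nat /\ d (g N) >= e.
Proof.
  intros Hd.
  destruct (classic (exists e, e > 0 /\ forall N, exists n, (n >= N)%nat /\ d n >= e))
    as [[e [He Hfreq]] | Hsmall].
  - right. exists e, (fun N => proj1_sig (constructive_indefinite_description _ (Hfreq N))).
    split; [exact He |].
    intro N. exact (proj2_sig (constructive_indefinite_description _ (Hfreq N))).
  - left. intros e He. apply NNPP. intro Hnot.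
    apply Hsmall. exists e. split; [exact He |].
    intro N. apply NNPP. intro Hnone. apply Hnot. exists N. intros n Hn.
    unfold R_dist. rewrite Rminus_0_r, Rabs_right by (apply Rle_ge, Hd).
    apply Rnot_ge_lt. intro Hlarge. apply Hnone. exists n. split; assumption.
Qed.

Theorem theorem3p1 (X : TwoNormedSpace) (E : X -> Prop) (f : X -> X) :
  stat_seq_continuous_on X E f -> seq_continuous_on X E f.
Proof.
  intros Hstat x0 xs HEx0 HExs Hcv z.
  destruct (Un_cv_0_or_frequently_large
              (fun n => norm2 X (vsub X (f (xs n)) (f x0)) z)
              (fun n => norm2_nonneg X _ _))
    as [Hcv_f | [e [g [He Hg]]]]; [exact Hcv_f | exfalso].
  assert (Hsub : converges X (fun N => xs (g N)) x0).
  { apply converges_reindex; [intro N; apply Hg | exact Hcv]. }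
  assert (Hstat_f : stat_converges X (fun N => f (xs (g N))) (f x0)).
  { apply Hstat; [exact HEx0 | intro N; apply HExs |].
    apply converges_stat_converges, Hsub. }
  exact (far_sequence_not_stat_converges X _ _ z e He (fun N => proj2 (Hg N)) Hstat_f).
Qed.
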